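(* Let $a,b,k\in\mathbb{N}$ with $k\le\min(a,b)$. Then $(\mathcal{A}_k([a]\times[b]),\le_k)\cong\mathcal{D}_k([a]\times[b])$ as posets.
   Context: $[n]=\{1,\dots,n\}$, and $[a]\times[b]$ and $\mathbb{Z}_+^2$ carry the product order. For a finite poset $P$, $\mathcal{A}_k(P)$ is the set of antichains of $P$ of size $k$; for $A,B\in\mathcal{A}_k(P)$, $A\prec_k B$ means $A\setminus B=\{a\}$, $B\setminus A=\{b\}$ are singletons with $a<_P b$, and $\le_k$ is the reflexive transitive closure of $\prec_k$. A Ferrers diagram is a finite order ideal of $\mathbb{Z}_+^2$; its Durfee length is the largest $k$ with $[k]\times[k]\subseteq D$. $\mathcal{D}_k([a]\times[b])$ is the set of Ferrers diagrams of Durfee length exactly $k$ contained in $[a]\times[b]$, ordered by inclusion. *)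

From mathcomp Require Import all_boot.
Set Implicit Arguments. Unset Strict Implicit. Unset Printing Implicit Defensive.

(* The grid [a] x [b], indexed from 0: (i,j) : 'I_a * 'I_b stands for (i+1,j+1). *)
Definition grid (a b : nat) := ('I_a * 'I_b)%type.

Section Grid.
Variables a b : nat.

Definition gle (x y : grid a b) : bool := (x.1 <= y.1) && (x.2 <= y.2).
Definition glt (x y : grid a b) : bool := (x != y) && gle x y.

Definition antichain (A : {set grid a b}) : bool :=
  [forall x in A, forall y in A, (x != y) ==> ~~ gle x y].
Definition antichains_k (k : nat) : pred {set grid a b} :=
  fun A => antichain A && (#|A| == k).

Definition prec_k (k : nat) (A B : {set grid a b}) : bool :=
  [&& A \in antichains_k k, B \in antichains_k k &
   [exists x, exists y, [&& A :\: B == [set x], B :\: A == [set y] & glt x y]]].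

Definition le_k (k : nat) (A B : {set grid a b}) : bool := connect (prec_k k) A B.

Definition ferrers (D : {set grid a b}) : bool :=
  [forall x, forall y, (gle x y && (y \in D)) ==> (x \in D)].

Definition has_square (D : {set grid a b}) (m : nat) : bool :=
  [&& m <= a, m <= b & [forall x : grid a b, ((x.1 < m) && (x.2 < m)) ==> (x \in D)]].

Definition durfee (D : {set grid a b}) : nat :=
  \max_(m < (minn a b).+1 | has_square D m) m.

Definition diagrams_k (k : nat) : pred {set grid a b} :=
  fun D => ferrers D && (durfee D == k).
End Grid.

From mathcomp Require Import all_boot zify.
Set Implicit Arguments. Unset Strict Implicit. Unset Printing Implicit Defensive.

(* Write N_x A t (resp. N_y A t) for the number of points of A whose first (resp. second)
   coordinate is at least t. An antichain A of size k is sent to the Ferrers diagram whose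
   Frobenius coordinates are the coordinates of A: its first k rows have as arms the second
   coordinates of A and its first k columns have as legs the first ones; so the diagram has
   Durfee length k, and every diagram of Durfee length k arises this way. Inclusion of such
   diagrams amounts to the domination N_x A <= N_x B and N_y A <= N_y B, which a covering
   step A <_k B (one point moved up) preserves. Conversely, if A is dominated by B and the
   diagrams differ, pick the largest t with N_x A t < N_x B t (or the same for y, by
   transposing the grid); no point of A has first coordinate t, and moving the point of A
   with the largest first coordinate below t to first coordinate t is a covering step whose
   result is still dominated by B. The diagram strictly grows, so induction on its size
   gives A <=_k B. *)

Lemma leq_card_interval (T : finType) (S : {set T}) (f : T -> nat) t s :
  {in S &, injective f} -> {in S, forall x, t <= f x < s} -> #|S| <= s - t.
Proof.
move=> f_inj f_bnd; rewrite cardE -(size_map f) -(size_iota t (s - t)).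
apply: uniq_leq_size => [|y /mapP[x]].
  by rewrite map_inj_in_uniq ?enum_uniq // => x y; rewrite !mem_enum; apply: f_inj.
by rewrite mem_enum mem_iota => /f_bnd bnd ->; lia.
Qed.

Lemma leq_bigmax_downclosed n (P : pred nat) :
    P 0 -> (forall s t, s <= t -> P t -> P s) -> (forall t, P t -> t < n) ->
  forall t, (t <= \max_(s < n | P s) s) = P t.
Proof.
move=> P0 P_dw P_bnd t.
have P_gt0 : 0 < #|[pred s : 'I_n | P s]| by apply/card_gt0P; exists (Ordinal (P_bnd 0 P0)).
have [m Pm max_m] := eq_bigmax_cond val P_gt0.
apply/idP/idP => [|Pt]; first by rewrite max_m => /P_dw; apply.
exact: (leq_bigmax_cond (F := val) (Ordinal (P_bnd t Pt))).
Qed.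

Lemma ltn_card_decreasing k (g : nat -> nat) t s :
    (forall r r', r < r' < k -> g r' < g r) ->
  (s < #|[set r : 'I_k | t <= g r]|) = (s < k) && (t <= g s).
Proof.
move=> g_dec; have g_mono r r' : r <= r' < k -> g r' <= g r.
  by rewrite leq_eqVlt => /andP[/orP[/eqP-> //|lt] r'k]; apply/ltnW/g_dec; rewrite lt.
apply/idP/idP => [|/andP[sk ts]].
  apply: contraTT => s_out; rewrite -leqNgt -[s]subn0.
  apply: (leq_card_interval (f := val)) => [r r' _ _ /val_inj //|r].
  rewrite inE /= => t_gr.
  by have := g_mono s r; have := ltn_ord r; lia.
have <- : #|[set widen_ord sk i | i : 'I_s.+1]| = s.+1.
  by rewrite card_imset ?card_ord // => i j /(congr1 val) /= /val_inj.
apply/subset_leq_card/subsetP => _ /imsetP[i _ ->]; rewrite inE.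
by apply: leq_trans ts (g_mono _ _ _); rewrite /= -ltnS ltn_ord.
Qed.

Definition px {a b} (p : grid a b) : nat := p.1.
Definition py {a b} (p : grid a b) : nat := p.2.

Section Counting.
Variables a b : nat.
Local Notation G := (grid a b).
Implicit Types (A B D : {set G}) (pi : G -> nat) (p q : G).

Definition card_ge A pi t := #|[set p in A | t <= pi p]|.

Lemma card_ge0 A pi : card_ge A pi 0 = #|A|.
Proof. by apply: eq_card => p; rewrite !inE andbT. Qed.

Lemma card_ge_mono A pi t s : t <= s -> card_ge A pi s <= card_ge A pi t.
Proof.
move=> ts; apply/subset_leq_card/subsetP => p; rewrite !inE.
by case/andP=> -> /(leq_trans ts).
Qed.

Lemma card_ge_le_card A pi t : card_ge A pi t <= #|A|.
Proof. by rewrite -(card_ge0 A pi) card_ge_mono. Qed.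

Lemma card_ge_bounded A pi n t :
  {in A &, injective pi} -> (forall p, pi p < n) -> card_ge A pi t <= n - t.
Proof.
move=> pi_inj pi_bnd; apply: leq_card_interval => [p q|p]; rewrite !inE.
  by move=> /andP[pA _] /andP[qA _]; apply: pi_inj.
by case/andP=> _ ->; rewrite pi_bnd.
Qed.

Lemma card_ge_lipschitz A pi t s :
  {in A &, injective pi} -> card_ge A pi t <= card_ge A pi s + (s - t).
Proof.
move=> pi_inj; case: (leqP s t) => [st|ts].
  by rewrite (leq_trans (card_ge_mono _ _ st)) ?leq_addr.
rewrite /card_ge.
have -> : [set p in A | t <= pi p] = [set p in A | s <= pi p] :|: [set p in A | t <= pi p < s].
  by apply/setP => p; rewrite !inE; case: (p \in A) => //=; lia.
apply: leq_trans (leq_card_setU _ _) _; rewrite leq_add2l.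
apply: leq_card_interval => [p q|p]; rewrite !inE.
  by move=> /andP[pA _] /andP[qA _]; apply: pi_inj.
by case/andP.
Qed.

Lemma card_ge_strict A pi p t s :
  p \in A -> t <= pi p -> pi p < s -> card_ge A pi s < card_ge A pi t.
Proof.
move=> pA tp ps; apply/proper_card/properP; split.
  by apply/subsetP => q; rewrite !inE => /andP[-> /(leq_trans (ltnW (leq_ltn_trans tp ps)))].
by exists p; rewrite !inE pA //= -ltnNge.
Qed.

Lemma card_geU1 A pi p t :
  p \notin A -> card_ge (p |: A) pi t = card_ge A pi t + (t <= pi p).
Proof.
move=> pA; rewrite /card_ge; case: leqP => tp.
  have -> : [set q in p |: A | t <= pi q] = p |: [set q in A | t <= pi q].
    by apply/setP => q; rewrite !inE; case: eqP => // ->; rewrite tp.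
  by rewrite cardsU1 inE (negbTE pA) addnC.
rewrite addn0; apply: eq_card => q; rewrite !inE; case: eqP => // ->.
by rewrite (negbTE pA) leqNgt tp andbF.
Qed.

Lemma card_geD1 A pi p t :
  p \in A -> card_ge A pi t = card_ge (A :\ p) pi t + (t <= pi p).
Proof. by move=> pA; rewrite -card_geU1 ?setD11 // setD1K. Qed.

Lemma antichains_kP k A : reflect (antichain A /\ #|A| = k) (A \in antichains_k k).
Proof. by rewrite unfold_in; apply: (iffP andP) => [[? /eqP]|[? ->]]. Qed.

Lemma gle_coord p q : gle p q = (px p <= px q) && (py p <= py q).
Proof. by []. Qed.

Lemma grid_eq p q : px p = px q -> py p = py q -> p = q.
Proof. by case: p q => [p1 p2] [q1 q2] /val_inj /= -> /val_inj /= ->. Qed.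

Lemma antichain_gle A p q : antichain A -> p \in A -> q \in A -> gle p q -> p = q.
Proof.
move=> /forall_inP/(_ p) hA pA qA; apply: contraTeq => pq.
by move/forall_inP: (hA pA) => /(_ q qA); rewrite pq.
Qed.

Lemma antichain_ltxy A p q : antichain A -> p \in A -> q \in A ->
  (px p < px q) = (py q < py p).
Proof.
move=> hA pA qA; apply/idP/idP => lt; rewrite ltnNge; apply/negP => le.
  by have e := antichain_gle hA pA qA (introT andP (conj (ltnW lt) le)); rewrite e ltnn in lt.
by have e := antichain_gle hA qA pA (introT andP (conj le (ltnW lt))); rewrite e ltnn in lt.
Qed.

Lemma antichain_injx A : antichain A -> {in A &, injective px}.
Proof.
move=> hA p q pA qA e; apply: (grid_eq e); apply/eqP.
rewrite eqn_leq [py p <= _]leqNgt [py q <= _]leqNgt.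
by rewrite -(antichain_ltxy hA pA qA) -(antichain_ltxy hA qA pA) e ltnn.
Qed.

Lemma antichain_injy A : antichain A -> {in A &, injective py}.
Proof.
move=> hA p q pA qA e; apply: (grid_eq _ e); apply/eqP.
rewrite eqn_leq [px p <= _]leqNgt [px q <= _]leqNgt.
by rewrite (antichain_ltxy hA qA pA) (antichain_ltxy hA pA qA) e ltnn.
Qed.

Lemma leq_card_antichain A : antichain A -> #|A| <= minn a b.
Proof.
move=> hA; rewrite leq_min; apply/andP; split; rewrite -[X in _ <= X]subn0.
  by rewrite -(card_ge0 A px) card_ge_bounded // => [|p]; [exact: antichain_injx | exact: ltn_ord].
by rewrite -(card_ge0 A py) card_ge_bounded // => [|p]; [exact: antichain_injy | exact: ltn_ord].
Qed.

(* Frobenius coordinates: for i <= j the cell (i, j) is in the diagram iff row i has arm at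
   least j - i, i.e. iff at least i + 1 points of A have second coordinate >= j - i; the second
   disjunct is the transposed condition for i >= j. *)
Definition diagram_of A : {set G} :=
  [set q | (px q < card_ge A py (py q - px q)) || (py q < card_ge A px (px q - py q))].

Definition dominated pi A B := forall t, card_ge A pi t <= card_ge B pi t.

Lemma diagram_of_ferrers A : antichain A -> ferrers (diagram_of A).
Proof.
move=> hA; apply/forallP => q; apply/forallP => r; apply/implyP.
rewrite gle_coord => /andP[/andP[le1 le2]].
have lipx := card_ge_lipschitz (px r - py r) (px q - py q) (antichain_injx hA).
have lipy := card_ge_lipschitz (py r - px r) (py q - px q) (antichain_injy hA).
have monx := @card_ge_mono A px (px r - py r) (px q - py q).
have mony := @card_ge_mono A py (py r - px r) (py q - px q).
rewrite !inE; lia.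
Qed.

Lemma diagram_of_subset A B :
  dominated px A B -> dominated py A B -> diagram_of A \subset diagram_of B.
Proof.
move=> domx domy; apply/subsetP => q; rewrite !inE.
by case/orP => [/leq_trans/(_ (domy _)) -> | /leq_trans/(_ (domx _)) ->]; rewrite ?orbT.
Qed.

Lemma dominated_x_of_subset A B : antichain A -> antichain B ->
  diagram_of A \subset diagram_of B -> dominated px A B.
Proof.
move=> hA hB /subsetP sAB t; set n := card_ge A px t.
case: (posnP n) => [-> // | n_gt0].
have n_a : n <= a - t by apply: card_ge_bounded (antichain_injx hA) _ => p; apply: ltn_ord.
have n_b : n <= b.
  by have := leq_card_antichain hA; have := card_ge_le_card A px t; rewrite -/n; lia.
have q1 : t + n.-1 < a by lia.
have q2 : n.-1 < b by lia.
pose q : G := (Ordinal q1, Ordinal q2).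
have [pxq pyq] : px q = t + n.-1 /\ py q = n.-1 by [].
have qA : q \in diagram_of A by rewrite inE pxq pyq addnK -/n; apply/orP; right; lia.
have lipB := card_ge_lipschitz 0 t (antichain_injx hB); rewrite card_ge0 in lipB.
move: (sAB q qA); rewrite inE pxq pyq addnK (_ : n.-1 - (t + n.-1) = 0) ?card_ge0; lia.
Qed.

Lemma card_ge_gap A pi t :
  card_ge A pi t.+1 < card_ge A pi t -> exists2 p, p \in A & pi p = t.
Proof.
case: (pickP [pred p in A | pi p == t]) => [p /andP[pA /eqP]|none]; first by exists p.
rewrite /card_ge (eq_card (B := [set p in A | t <= pi p])) ?ltnn // => p; rewrite !inE.
have := none p; rewrite /= eq_sym.
by case: (p \in A) => //= tp; rewrite [t <= _]leq_eqVlt tp.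
Qed.

Lemma dominated_exchange pi A B x y :
  A :\: B = [set x] -> B :\: A = [set y] -> pi x <= pi y -> dominated pi A B.
Proof.
move=> eA eB le_xy t.
have eA' : A = x |: (A :&: B) by rewrite -eA setUC setID.
have eB' : B = y |: (A :&: B) by rewrite -eB setUC setIC setID.
have xB : x \notin B by move: (set11 x); rewrite -eA inE => /andP[].
have yA : y \notin A by move: (set11 y); rewrite -eB inE => /andP[].
rewrite [in card_ge A pi t]eA' [in card_ge B pi t]eB' !card_geU1 ?inE ?(negbTE xB) ?(negbTE yA)
  ?andbF // leq_add2l.
by case: (leqP t (pi x)) => // /leq_trans ->.
Qed.

Lemma antichain_split A p :
  antichain A -> p \in A -> card_ge A py (py p) + card_ge A px (px p).+1 = #|A|.
Proof.
move=> hA pA; rewrite -(cardsID [set q | px p < px q] A) addnC; congr (_ + _).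
  by apply: eq_card => q; rewrite !inE andbC.
apply: eq_card => q; rewrite !inE andbC; case qA: (q \in A); rewrite ?andbF // !andbT -leqNgt.
case: (ltngtP (px q) (px p)) => [lt|lt|e].
- by apply: ltnW; rewrite -(antichain_ltxy hA qA pA).
- by rewrite leqNgt -(antichain_ltxy hA pA qA) lt.
- by rewrite (antichain_injx hA qA pA e) leqnn.
Qed.

Lemma antichain_eq_card_ge A B : antichain A -> antichain B ->
  card_ge A px =1 card_ge B px -> card_ge A py =1 card_ge B py -> A = B.
Proof.
have sub A' B' : antichain A' -> antichain B' ->
    card_ge A' px =1 card_ge B' px -> card_ge A' py =1 card_ge B' py -> A' \subset B'.
  move=> hA hB ex ey; apply/subsetP => p pA.
  have [q qB qp] : exists2 q, q \in B' & px q = px p.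
    by apply: card_ge_gap; rewrite -!ex (card_ge_strict pA).
  have eAB : #|A'| = #|B'| by rewrite -(card_ge0 A' px) ex card_ge0.
  have eq_y : card_ge A' py (py p) = card_ge A' py (py q).
    by have := antichain_split hA pA; have := antichain_split hB qB; rewrite qp -ex -ey; lia.
  suff -> : p = q by [].
  apply: grid_eq (esym qp) _; case: (ltngtP (py p) (py q)) => // lt_pq.
    by have := card_ge_strict pA (leqnn _) lt_pq; rewrite eq_y ltnn.
  by have := card_ge_strict qB (leqnn _) lt_pq; rewrite -!ey eq_y ltnn.
move=> hA hB ex ey; apply/eqP; rewrite eqEsubset !sub // => t; by rewrite ?ex ?ey.
Qed.

Lemma antichain_subset A B : antichain A -> B \subset A -> antichain B.
Proof.
move=> hA /subsetP BA; apply/forall_inP => p pB; apply/forall_inP => q qB.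
by apply/implyP; apply: contra => /(antichain_gle hA (BA p pB) (BA q qB)) ->.
Qed.

Lemma antichain_setU1 A p :
  antichain A -> {in A, forall q, ~~ gle p q && ~~ gle q p} -> antichain (p |: A).
Proof.
move=> hA incomp; apply/forall_inP => q1 h1; apply/forall_inP => q2 h2; apply/implyP => neq.
move: h1 h2 neq; rewrite !inE.
case/predU1P => [-> | q1A]; case/predU1P => [-> | q2A] neq.
- by rewrite eqxx in neq.
- by case/andP: (incomp q2 q2A).
- by case/andP: (incomp q1 q1A).
- by apply: contra neq => /(antichain_gle hA q1A q2A) ->.
Qed.

Lemma leq_durfee D m : (m <= durfee D) = has_square D m.
Proof.
apply: leq_bigmax_downclosed => [|s t st /and3P[ta tb /forallP sq]|t /and3P[ta tb _]].
- by apply/and3P; split => //; apply/forallP => x; rewrite ltn0.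
- apply/and3P; split; rewrite ?(leq_trans st) //; apply/forallP => x.
  by apply/implyP => /andP[x1 x2]; apply: (implyP (sq x)); rewrite !(leq_trans _ st).
- by rewrite ltnS leq_min ta tb.
Qed.

Lemma durfee_diagram_of A : antichain A -> durfee (diagram_of A) = #|A|.
Proof.
move=> hA; have := leq_card_antichain hA; rewrite leq_min => /andP[Aa Ab].
apply/eqP; rewrite eqn_leq leq_durfee; apply/andP; split.
  rewrite leqNgt leq_durfee; apply/negP => /and3P[Aa' Ab' /forallP/(_ (Ordinal Aa', Ordinal Ab'))].
  by rewrite /= !ltnSn inE /px /py /= subnn !card_ge0 ltnn.
apply/and3P; split => //; apply/forallP => x; apply/implyP => /andP[x1 x2].
have := card_ge_lipschitz 0 (py x - px x) (antichain_injy hA); rewrite card_ge0.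
by rewrite inE; apply: contraLR; rewrite negb_or -!leqNgt /px /py; lia.
Qed.
End Counting.

Definition grid_swap {a b} (p : grid a b) : grid b a := (p.2, p.1).

Lemma grid_swapK {a b} : cancel (@grid_swap a b) grid_swap.
Proof. by case. Qed.

Lemma grid_swap_inj {a b} : injective (@grid_swap a b).
Proof. exact: can_inj grid_swapK. Qed.

Section Swap.
Variables a b : nat.
Implicit Types (A B : {set grid a b}) (p q : grid a b).

Lemma grid_swap_eq p (q : grid b a) : (grid_swap p == q) = (p == grid_swap q).
Proof. by case: p => p1 p2; case: q => q1 q2; rewrite /grid_swap !xpair_eqE andbC. Qed.

Lemma mem_grid_swap A (q : grid b a) : (q \in grid_swap @: A) = (grid_swap q \in A).
Proof. by rewrite (can2_imset_pre _ grid_swapK grid_swapK) inE. Qed.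

Lemma grid_swap_setK A : grid_swap @: (grid_swap @: A) = A.
Proof. by rewrite -imset_comp (eq_imset _ grid_swapK) imset_id. Qed.

Lemma gle_swap p q : gle (grid_swap p) (grid_swap q) = gle p q.
Proof. exact: andbC. Qed.

Lemma card_ge_swap A (pi : grid b a -> nat) t :
  card_ge (grid_swap @: A) pi t = card_ge A (pi \o grid_swap) t.
Proof.
rewrite /card_ge -[RHS](card_imset _ grid_swap_inj); apply: eq_card => q.
by rewrite !(inE, mem_grid_swap) /= grid_swapK.
Qed.

Lemma card_ge_swapx A t : card_ge (grid_swap @: A) px t = card_ge A py t.
Proof. exact: card_ge_swap. Qed.

Lemma card_ge_swapy A t : card_ge (grid_swap @: A) py t = card_ge A px t.
Proof. exact: card_ge_swap. Qed.

Lemma antichain_swap A : antichain A -> antichain (grid_swap @: A).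
Proof.
move=> hA; apply/forall_inP => _ /imsetP[p pA ->]; apply/forall_inP => _ /imsetP[q qA ->].
rewrite (inj_eq grid_swap_inj) gle_swap.
by apply/implyP => pq; apply: contra pq => /(antichain_gle hA pA qA) ->.
Qed.

Lemma antichains_k_swap k A : A \in antichains_k k -> grid_swap @: A \in antichains_k k.
Proof.
rewrite !unfold_in => /andP[/antichain_swap -> /eqP <-].
by rewrite card_imset ?eqxx //; exact: grid_swap_inj.
Qed.

Lemma prec_k_swap k A B : prec_k k A B -> prec_k k (grid_swap @: A) (grid_swap @: B).
Proof.
case/and3P => hA hB /existsP[x /existsP[y /and3P[/eqP eA /eqP eB xy]]].
rewrite /prec_k !antichains_k_swap //; apply/existsP; exists (grid_swap x).
apply/existsP; exists (grid_swap y); apply/and3P; split; last first.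
  by move: xy; rewrite /glt (inj_eq grid_swap_inj) gle_swap.
all: apply/eqP/setP => q; rewrite !(inE, mem_grid_swap) eq_sym grid_swap_eq eq_sym.
all: by rewrite -in_set1 -?eA -?eB inE.
Qed.

Lemma diagram_of_swap A : diagram_of (grid_swap @: A) = grid_swap @: diagram_of A.
Proof.
apply/setP => q; rewrite mem_grid_swap !inE !card_ge_swapx !card_ge_swapy.
exact: orbC.
Qed.
End Swap.

Section Exchange.
Variables a b : nat.
Local Notation G := (grid a b).
Implicit Types (A B : {set G}) (p q : G).

Lemma prec_k_replace k A p p' :
    A \in antichains_k k -> p \in A -> p' \notin A -> glt p p' ->
  antichain (p' |: A :\ p) -> prec_k k A (p' |: A :\ p).
Proof.
move=> hAk pA p'A pp' hA'; rewrite /prec_k hAk /=; apply/andP; split.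
  move: hAk; rewrite !unfold_in hA' cardsU1 in_setD1 (negbTE p'A) andbF.
  by rewrite [in X in X -> _](cardsD1 p A) pA => /andP[].
apply/existsP; exists p; apply/existsP; exists p'; rewrite pp' andbT.
have p'p : (p == p') = false by case/andP: pp' => /negbTE.
apply/andP; split; apply/eqP/setP => q; rewrite !inE.
  case: (eqVneq q p) => [->|_] /=; first by rewrite p'p pA.
  by case: (q \in A); rewrite ?orbT ?andbF.
case: (eqVneq q p') => [->|_] /=; first by rewrite (negbTE p'A).
by case: (q \in A); rewrite ?andbF.
Qed.

Lemma dominated_strict_gap A B t0 :
    antichain B -> dominated px A B -> card_ge A px t0 < card_ge B px t0 ->
  exists2 t, card_ge A px t < card_ge B px t & t < a /\ {in A, forall q, px q != t}.
Proof.
move=> hB domx lt0; have bnd s : card_ge A px s < card_ge B px s -> s < a.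
  have := card_ge_bounded s (antichain_injx hB) (fun p => ltn_ord p.1); lia.
have [t lt_t t_max] := ex_maxnP (ex_intro _ t0 lt0) (fun s h => ltnW (bnd s h)).
exists t => //; split=> [|q qA]; first exact: bnd.
apply/eqP => qt; have : card_ge A px t.+1 < card_ge A px t.
  by apply: (card_ge_strict qA); rewrite qt.
have := card_ge_lipschitz t t.+1 (antichain_injx hB); have := domx t.+1.
have : ~~ (card_ge A px t.+1 < card_ge B px t.+1) by apply/negP => /t_max; rewrite ltnn.
lia.
Qed.

Lemma antichain_shift_x A p p' :
    antichain A -> p \in A -> py p' = py p -> px p < px p' ->
    {in A, forall q, px p < px q -> px p' < px q} ->
  antichain (p' |: A :\ p).
Proof.
move=> hA pA p'y pp' beyond; apply: antichain_setU1 (antichain_subset hA (subD1set A p)) _.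
move=> q; rewrite in_setD1 !gle_coord p'y => /andP[qp qA].
case: (ltngtP (px q) (px p)) => [lt|lt|/(antichain_injx hA qA pA) e]; last first.
- by rewrite e eqxx in qp.
- by have := beyond q qA lt; have := antichain_ltxy hA pA qA; rewrite lt; lia.
- by have := antichain_ltxy hA qA pA; rewrite lt; lia.
Qed.

Lemma prec_k_step_x k A B t0 :
    A \in antichains_k k -> B \in antichains_k k ->
    dominated px A B -> dominated py A B -> card_ge A px t0 < card_ge B px t0 ->
  exists2 A', prec_k k A A' & dominated px A' B /\ dominated py A' B.
Proof.
move=> hAk /antichains_kP[hB cB] domx domy lt0; have /antichains_kP[hA cA] := hAk.
have [t lt_t [ta gap]] := dominated_strict_gap hB domx lt0.
have [p0 p0A p0t] : exists2 p0, p0 \in A & px p0 < t.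
  have : ~~ (A \subset [set q in A | t <= px q]).
    apply: contraL lt_t => /subset_leq_card le_A; rewrite -leqNgt.
    by apply: leq_trans (card_ge_le_card B px t) _; rewrite cB -cA.
  by case/subsetPn => q qA; rewrite inE qA -ltnNge; exists q.
(* p, the point of A with the largest first coordinate below t, moves to first coordinate t *)
have [p /andP[pA pt] p_max] :=
  @arg_maxnP _ p0 [pred q in A | px q < t] px (introT andP (conj p0A p0t)).
pose p' : G := (Ordinal ta, p.2).
have p'A : p' \notin A by apply/negP => /gap; rewrite eqxx.
have hA' : antichain (p' |: A :\ p).
  apply: antichain_shift_x => // q qA pq; rewrite ltn_neqAle eq_sym gap //= leqNgt.
  by apply/negP => qt; have := p_max q; rewrite /= qA qt => /(_ isT); rewrite leqNgt pq.
exists (p' |: A :\ p).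
  apply: prec_k_replace => //; rewrite /glt gle_coord leqnn (ltnW pt) !andbT.
  by apply: contraTneq pt => ->; rewrite ltnn.
have p'Ap : p' \notin A :\ p by rewrite in_setD1 (negbTE p'A) andbF.
split=> s; rewrite card_geU1 //; last by rewrite -card_geD1.
have := domx s; rewrite (card_geD1 px s pA).
case: (leqP s (px p)) => [sp|ps]; first by rewrite (leq_trans sp (ltnW pt)).
case: (leqP s t) => // st _; rewrite addn1.
have -> : card_ge (A :\ p) px s = card_ge A px t.
  have := card_geD1 px s pA; rewrite leqNgt ps addn0 => <-; apply: eq_card => q; rewrite !inE.
  case qA: (q \in A) => //=; case: (ltnP (px q) t) => [qt|]; last exact: leq_trans st.
  by apply/negbTE; rewrite -ltnNge (leq_ltn_trans (p_max q _)) //= qA.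
exact: leq_trans lt_t (card_ge_mono B px st).
Qed.
End Exchange.

Section Order.
Variables a b : nat.
Local Notation G := (grid a b).
Implicit Types (A B : {set G}) (p q : G).

Lemma diagram_of_subsetP A B : antichain A -> antichain B ->
  diagram_of A \subset diagram_of B <-> dominated px A B /\ dominated py A B.
Proof.
move=> hA hB; split=> [sAB|[]]; last exact: diagram_of_subset.
split; first exact: dominated_x_of_subset.
move=> t; rewrite -!card_ge_swapx; apply: dominated_x_of_subset; try exact: antichain_swap.
by rewrite !diagram_of_swap imsetS.
Qed.

Lemma diagram_of_inj : {in @antichain a b &, injective (@diagram_of a b)}.
Proof.
move=> A B hA hB eAB.
have [[xAB yAB] [xBA yBA]] : (dominated px A B /\ dominated py A B) /\
                             (dominated px B A /\ dominated py B A).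
  by split; [apply/(diagram_of_subsetP hA hB) | apply/(diagram_of_subsetP hB hA)];
    rewrite eAB subxx.
by apply: antichain_eq_card_ge => // t; apply/eqP; rewrite eqn_leq ?xAB ?xBA ?yAB ?yBA.
Qed.

Lemma prec_k_step k A B :
    A \in antichains_k k -> B \in antichains_k k ->
    dominated px A B -> dominated py A B -> diagram_of A != diagram_of B ->
  exists2 A', prec_k k A A' & dominated px A' B /\ dominated py A' B.
Proof.
move=> hAk hBk domx domy neq.
have /properP[_ [q qB qA]] : diagram_of A \proper diagram_of B.
  by rewrite properEneq neq diagram_of_subset.
move: qB qA; rewrite !inE negb_or -!leqNgt => /orP[ltB|ltB] /andP[leA1 leA2]; last first.
  exact: prec_k_step_x hAk hBk domx domy (leq_ltn_trans leA2 ltB).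
have domx' : dominated px (grid_swap @: A) (grid_swap @: B).
  by move=> t; rewrite !card_ge_swapx.
have domy' : dominated py (grid_swap @: A) (grid_swap @: B).
  by move=> t; rewrite !card_ge_swapy.
have lt' : card_ge (grid_swap @: A) px (py q - px q) < card_ge (grid_swap @: B) px (py q - px q).
  by rewrite !card_ge_swapx (leq_ltn_trans leA1 ltB).
have [A' prec' [domx'' domy'']] :=
  prec_k_step_x (antichains_k_swap hAk) (antichains_k_swap hBk) domx' domy' lt'.
exists (grid_swap @: A'); first by rewrite -(grid_swap_setK A); apply: prec_k_swap.
split=> t; [move: (domy'' t) | move: (domx'' t)];
  by rewrite ?card_ge_swapx ?card_ge_swapy.
Qed.

Lemma prec_k_diagram_of_proper k A B : prec_k k A B -> diagram_of A \proper diagram_of B.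
Proof.
case/and3P=> /antichains_kP[hA _] /antichains_kP[hB _].
case/existsP=> x /existsP[y /and3P[/eqP eA /eqP eB /andP[_]]].
rewrite gle_coord => /andP[lex ley].
have sAB : diagram_of A \subset diagram_of B.
  by apply: diagram_of_subset; apply: dominated_exchange eA eB _.
rewrite properEneq sAB andbT.
apply/eqP => /(diagram_of_inj hA hB) AB.
by move/setP: eA => /(_ x); rewrite AB setDv !inE eqxx.
Qed.

Lemma le_k_diagram_of k A B : A \in antichains_k k -> B \in antichains_k k ->
  le_k k A B = (diagram_of A \subset diagram_of B).
Proof.
move=> hAk hBk; apply/idP/idP.
  case/connectP=> s; elim: s A {hAk} => [|A' s IH] A /=; first by move=> _ ->.
  case/andP=> /prec_k_diagram_of_proper/proper_sub sAA' /IH sA'B /sA'B.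
  exact: subset_trans.
move: {2}_.+1 (ltnSn (#|diagram_of B| - #|diagram_of A|)) => n.
elim: n A hAk => // n IH A hAk lt_n sAB.
have /antichains_kP[hA _] := hAk; have /antichains_kP[hB _] := hBk.
case: (eqVneq (diagram_of A) (diagram_of B)) => [eAB|neq].
  by rewrite (diagram_of_inj hA hB eAB); apply: connect0.
have [domx domy] := (diagram_of_subsetP hA hB).1 sAB.
have [A' prec [domx' domy']] := prec_k_step hAk hBk domx domy neq.
have [_ hA'k _] := and3P prec.
have sA'B := diagram_of_subset domx' domy'.
have lt_n' : #|diagram_of B| - #|diagram_of A'| < n.
  by have := proper_card (prec_k_diagram_of_proper prec); have := subset_leq_card sA'B; lia.
exact: connect_trans (connect1 prec) (IH A' hA'k lt_n' sA'B).
Qed.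
End Order.

Section Surjectivity.
Variables a b : nat.
Local Notation G := (grid a b).
Implicit Types (D : {set G}) (q : G).

Definition cell D r c := [exists q in D, (px q == r) && (py q == c)].

Lemma cellE D q : cell D (px q) (py q) = (q \in D).
Proof.
apply/exists_inP/idP => [[q' q'D /andP[/eqP e1 /eqP e2]]|qD]; last by exists q; rewrite ?eqxx.
by rewrite -(grid_eq e1 e2).
Qed.

Lemma cell_bound D r c : cell D r c -> r < a /\ c < b.
Proof. by case/exists_inP=> q _ /andP[/eqP <- /eqP <-]; split; apply: ltn_ord. Qed.

Lemma cell_ferrers D r c r' c' :
  ferrers D -> cell D r c -> r' <= r -> c' <= c -> cell D r' c'.
Proof.
move=> /forallP D_dw rc r'r c'c; have [ra cb] := cell_bound rc.
have r'a := leq_ltn_trans r'r ra; have c'b := leq_ltn_trans c'c cb.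
case/exists_inP: rc => q qD /andP[/eqP qr /eqP qc].
rewrite -[r']/(px (Ordinal r'a, Ordinal c'b) : nat) -[c']/(py (Ordinal r'a, Ordinal c'b) : nat).
rewrite cellE; apply: (implyP (forallP (D_dw _) q)).
by rewrite qD andbT gle_coord qr qc r'r c'c.
Qed.

Section Diagram.
Variables (k : nat) (D : {set G}).
Hypotheses (D_ferrers : ferrers D) (D_durfee : durfee D = k).

Lemma cell_square r c : r < k -> c < k -> cell D r c.
Proof.
have /and3P[ka kb /forallP sq] : has_square D k by rewrite -leq_durfee D_durfee.
move=> rk ck; have ra := leq_trans rk ka; have cb := leq_trans ck kb.
rewrite -[r]/(px (Ordinal ra, Ordinal cb) : nat) -[c]/(py (Ordinal ra, Ordinal cb) : nat).
by rewrite cellE; apply: (implyP (sq _)); rewrite /= rk.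
Qed.

Lemma cell_diag r : cell D r r = (r < k).
Proof.
apply/idP/idP => [rr|]; last by move=> rk; apply: cell_square.
rewrite ltnNge; apply/negP => kr; have kk := cell_ferrers D_ferrers rr kr kr.
have [ka kb] := cell_bound kk.
suff : k.+1 <= durfee D by rewrite D_durfee ltnn.
rewrite leq_durfee; apply/and3P; split => //; apply/forallP => x; apply/implyP => /andP[x1 x2].
by rewrite -cellE (cell_ferrers D_ferrers kk) // -ltnS.
Qed.

Lemma cell_hook r c : cell D r c -> (r < k) || (c < k).
Proof.
move=> rc; rewrite -!cell_diag; case: (leqP r c) => [le_rc|/ltnW le_cr].
  by rewrite (cell_ferrers D_ferrers rc (leqnn r) le_rc).
by rewrite (cell_ferrers D_ferrers rc le_cr (leqnn c)) orbT.
Qed.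

Definition arm r := \max_(t < b | cell D r (r + t)) t.
Definition leg c := \max_(t < a | cell D (c + t) c) t.

Lemma leq_arm r t : r < k -> (t <= arm r) = cell D r (r + t).
Proof.
move=> rk; apply: (leq_bigmax_downclosed (P := fun t => cell D r (r + t))) => [|s t' st|t'].
- by rewrite addn0 cell_square.
- by move/(cell_ferrers D_ferrers); apply; rewrite ?leq_add2l.
- by case/cell_bound=> _; apply: leq_ltn_trans (leq_addl _ _).
Qed.

Lemma leq_leg c t : c < k -> (t <= leg c) = cell D (c + t) c.
Proof.
move=> ck; apply: (leq_bigmax_downclosed (P := fun t => cell D (c + t) c)) => [|s t' st|t'].
- by rewrite addn0 cell_square.
- by move/(cell_ferrers D_ferrers); apply; rewrite ?leq_add2l.
- by case/cell_bound=> + _; apply: leq_ltn_trans (leq_addl _ _).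
Qed.

Lemma arm_lt r : r < k -> arm r < b.
Proof.
move=> rk; have := leqnn (arm r); rewrite leq_arm // => /cell_bound[_].
exact: leq_ltn_trans (leq_addl _ _).
Qed.

Lemma leg_lt c : c < k -> leg c < a.
Proof.
move=> ck; have := leqnn (leg c); rewrite leq_leg // => /cell_bound[+ _].
exact: leq_ltn_trans (leq_addl _ _).
Qed.

Lemma arm_decreasing r r' : r < r' < k -> arm r' < arm r.
Proof.
case/andP=> rr' r'k; have := leqnn (arm r'); rewrite leq_arm // => cell_r'.
have : arm r' + (r' - r) <= arm r.
  by rewrite leq_arm ?(ltn_trans rr') //; apply: cell_ferrers D_ferrers cell_r' _ _; lia.
lia.
Qed.

Lemma leg_decreasing c c' : c < c' < k -> leg c' < leg c.
Proof.
case/andP=> cc' c'k; have := leqnn (leg c'); rewrite leq_leg // => cell_c'.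
have : leg c' + (c' - c) <= leg c.
  by rewrite leq_leg ?(ltn_trans cc') //; apply: cell_ferrers D_ferrers cell_c' _ _; lia.
lia.
Qed.

(* Arms and legs both decrease, so the arm of row r paired with the leg of column k-1-r
   gives an antichain. *)
Definition corner (r : 'I_k) : G :=
  (Ordinal (leg_lt (ltn_ord (rev_ord r))), Ordinal (arm_lt (ltn_ord r))).

Definition antichain_of : {set G} := [set corner r | r : 'I_k].

Lemma corner_inj : injective corner.
Proof.
move=> r r' /(congr1 py) e; have {}e : arm r = arm r' := e.
apply: val_inj; case: (ltngtP r r') => // lt.
- by have := @arm_decreasing r r'; rewrite lt ltn_ord e ltnn => /(_ isT).
- by have := @arm_decreasing r' r; rewrite lt ltn_ord e ltnn => /(_ isT).
Qed.

Lemma antichain_of_antichains_k : antichain_of \in antichains_k k.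
Proof.
apply/antichains_kP; split; last by rewrite card_imset ?card_ord //; apply: corner_inj.
apply/forall_inP => _ /imsetP[r _ ->]; apply/forall_inP => _ /imsetP[r' _ ->].
apply/implyP; rewrite (inj_eq corner_inj) gle_coord /px /py /= => rr'.
have rk := ltn_ord r; have r'k := ltn_ord r'.
case: (ltngtP r r') => [lt|lt|/val_inj e]; last by rewrite e eqxx in rr'.
- by rewrite [arm r <= _]leqNgt arm_decreasing ?andbF // lt r'k.
- by rewrite [leg _ <= _]leqNgt leg_decreasing //; apply/andP; split; lia.
Qed.

Lemma card_ge_antichain_of pi t :
  card_ge antichain_of pi t = #|[set r : 'I_k | t <= pi (corner r)]|.
Proof.
rewrite -(card_imset _ corner_inj); apply: eq_card => q; rewrite inE.
apply/andP/imsetP => [[/imsetP[r _ ->] tr] | [r + ->]]; first by exists r; rewrite ?inE.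
by rewrite inE => tr; rewrite imset_f.
Qed.

Lemma card_ge_antichain_of_x t : card_ge antichain_of px t = #|[set c : 'I_k | t <= leg c]|.
Proof.
rewrite card_ge_antichain_of -(card_imset _ (can_inj (@rev_ordK k))).
apply: eq_card => c; rewrite (can2_imset_pre _ (@rev_ordK k) (@rev_ordK k)) !inE.
by rewrite -[px _]/(leg (rev_ord (rev_ord c))) rev_ordK.
Qed.

Lemma card_ge_antichain_of_y t : card_ge antichain_of py t = #|[set r : 'I_k | t <= arm r]|.
Proof. exact: card_ge_antichain_of. Qed.

Lemma cell_upper r c : r <= c -> cell D r c = (r < k) && cell D r c || (c < k).
Proof.
move=> rc; case: (ltnP c k) => ck; first by rewrite orbT cell_square // (leq_ltn_trans rc ck).
rewrite orbF; apply/idP/andP => [rcD|[] //]; split=> //.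
by have := cell_hook rcD; rewrite [c < k]ltnNge ck orbF.
Qed.

Lemma cell_lower r c : c <= r -> cell D r c = (r < k) || (c < k) && cell D r c.
Proof.
move=> cr; case: (ltnP r k) => rk; first by rewrite cell_square // (leq_ltn_trans cr rk).
apply/idP/andP => [rcD|[] //]; split=> //.
by have := cell_hook rcD; rewrite [r < k]ltnNge rk.
Qed.

Lemma diagram_of_antichain_of : diagram_of antichain_of = D.
Proof.
apply/setP => q; rewrite inE card_ge_antichain_of_y card_ge_antichain_of_x.
rewrite !ltn_card_decreasing; [|exact: leg_decreasing|exact: arm_decreasing].
have -> : (px q < k) && (py q - px q <= arm (px q)) =
          (px q < k) && cell D (px q) (px q + (py q - px q)).
  by case xk: (px q < k); rewrite //= leq_arm.
have -> : (py q < k) && (px q - py q <= leg (py q)) =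
          (py q < k) && cell D (py q + (px q - py q)) (py q).
  by case yk: (py q < k); rewrite //= leq_leg.
rewrite -cellE; case: (leqP (px q) (py q)) => [le|/ltnW le].
  rewrite (subnKC le) (eqP (_ : px q - py q == 0)) ?subn_eq0 // addn0 cell_diag andbb.
  by rewrite -cell_upper.
rewrite (subnKC le) (eqP (_ : py q - px q == 0)) ?subn_eq0 // addn0 cell_diag andbb.
by rewrite -cell_lower.
Qed.
End Diagram.
End Surjectivity.

Theorem corollary3p2 (a b k : nat) (hk : k <= minn a b) :
  exists f : {set grid a b} -> {set grid a b},
    [/\ {in antichains_k k, forall A, f A \in diagrams_k k},
        {in diagrams_k k, forall D, exists2 A, A \in antichains_k k & f A = D},
        {in antichains_k k &, injective f}
      & {in antichains_k k &, forall A B, le_k k A B = (f A \subset f B)}].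
Proof.
exists (@diagram_of a b); split.
- move=> A /antichains_kP[hA <-].
  by rewrite unfold_in /diagrams_k diagram_of_ferrers // durfee_diagram_of ?eqxx.
- move=> D; rewrite unfold_in => /andP[D_ferrers /eqP D_durfee].
  exists (antichain_of D_ferrers D_durfee); first exact: antichain_of_antichains_k.
  exact: diagram_of_antichain_of.
- by move=> A B /antichains_kP[hA _] /antichains_kP[hB _]; apply: diagram_of_inj.
- exact: le_k_diagram_of.
Qed.
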